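(* Let $\mathcal{F}=\langle\mathbb{A},(\mu_i)_{i\in\mathsf{Ag}}\rangle$ be an APE-structure and $\mathbb{E}=(E,(\sim_i),(P_i),\Phi,\mathsf{pre})$ a probabilistic event structure over $\mathbb{A}$. Then the maps $(\mu^{\mathbb{E}}_i)_{i\in\mathsf{Ag}}$ of the updated structure $\mathcal{F}^{\mathbb{E}}=(\mathbb{A}^{\mathbb{E}},(\mu^{\mathbb{E}}_i)_{i\in\mathsf{Ag}})$ are well-defined.
   Context: Fix a set $\mathsf{Ag}$ of agents. A monadic Heyting algebra is a Heyting algebra $\mathbb{L}$ with, for each $i\in\mathsf{Ag}$, monotone unary operations $\lozenge_i,\Box_i$ such that for all $a,b$: $a\leq\lozenge_i a$; $\Box_i a\leq a$; $\lozenge_i(a\vee b)\leq\lozenge_i a\vee\lozenge_i b$; $\Box_i(a\to b)\leq\Box_i a\to\Box_i b$; $\lozenge_i a\leq\Box_i\lozenge_i a$; $\lozenge_i\Box_i a\leq\Box_i a$; $\Box_i(a\to b)\leq\lozenge_i a\to\lozenge_i b$; $\lozenge_i\bot\leq\bot$; $\top\leq\Box_i\top$. An epistemic Heyting algebra is a finite monadic Heyting algebra with $\lozenge_i a\vee\neg\lozenge_i a=\top$ for all $i,a$. An element $c$ is $i$-minimal if $c\neq\bot$, $\lozenge_i c=c$, and whenever $d<c$ and $\lozenge_i d=d$ then $d=\bot$; $\mathsf{Min}_i(\cdot)$ is the set of $i$-minimal elements. A partial map $\mu:\mathbb{A}\to\mathbb{R}^+$ is an $i$-premeasure if: $\mathsf{dom}(\mu)=\mathsf{Min}_i(\mathbb{A}){\downarrow}$;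 $\mu$ is order-preserving; for $a\in\mathsf{Min}_i(\mathbb{A})$ and $b,c\leq a$, $\mu(b\vee c)=\mu(b)+\mu(c)-\mu(b\wedge c)$; $\mu(\bot)=0$ if $\mathsf{dom}(\mu)\neq\varnothing$. It is an $i$-measure if also: for $a\in\mathsf{Min}_i(\mathbb{A})$ and $b<c\leq a$, $\mu(b)<\mu(c)$; and $\mu(a)=1$ for $a\in\mathsf{Min}_i(\mathbb{A})$. An APE-structure is $\langle\mathbb{A},(\mu_i)\rangle$ with $\mathbb{A}$ an epistemic Heyting algebra and each $\mu_i$ an $i$-measure. A pre-ordered multiset on $X$ is a multiset in which the copies $x_1,\dots,x_n$ of an element carry the linear order $x_1\prec\cdots\prec x_n$. A probabilistic event structure over $\mathbb{A}$ is $(E,(\sim_i),(P_i),\Phi,\mathsf{pre})$: $E$ non-empty finite; $\sim_i$ equivalence relations on $E$; $P_i:E\to\,]0,1]$ with $\sum\{P_i(e')\mid e'\sim_i e\}=1$; $\Phi$ a finite pre-ordered multiset on $\mathbb{A}$ such that any $a,b\in\Phi$ arising from distinct elements satisfy $a\wedge b=\bot$ or $a<b$ or $b<a$; $\mathsf{pre}(\bullet\mid a)$ a probability distribution on $E$ for each $a\in\Phi$; and if $\mathsf{pre}(e\mid a)=0$ then $\mathsf{pre}(e\mid b)=0$ for $b\in\Phi$ with $a<b$ (distinct elements) or $a\prec b$ (copies). For $a\in\Phi$: $\mathrm{mb}(a)$ is the set of maximal elements of $\Phi\cap({\downarrow}a\setminus\{a\})$, and $\mu^a_i(x):=\mu_i(x\wedge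 a)-\sum_{b\in\mathrm{mb}(a)}\mu_i(x\wedge b)$ for $x\in\mathsf{Min}_i(\mathbb{A}){\downarrow}$. Intermediate algebra $\mathbb{A}'=\prod_{\mathbb{E}}\mathbb{A}$: all maps $f:E\to\mathbb{A}$ with pointwise Heyting operations, $(\lozenge'_i f)(e)=\bigvee\{\lozenge_i f(e')\mid e'\sim_i e\}$, $(\Box'_i f)(e)=\bigwedge\{\Box_i f(e')\mid e'\sim_i e\}$; and $\mu'_i:\mathsf{Min}_i(\mathbb{A}'){\downarrow}\to\mathbb{R}^+$, $\mu'_i(f)=\sum_{e\in E}\sum_{a\in\Phi}P_i(e)\mu^a_i(f(e))\mathsf{pre}(e\mid a)$. Define $\overline{\mathsf{pre}}\in\mathbb{A}'$ by $\overline{\mathsf{pre}}(e)=\bigvee\{a\in\Phi\mid\mathsf{pre}(e\mid a)\neq0\}$. For an epistemic Heyting algebra $\mathbb{B}$ and $c\in\mathbb{B}$, the pseudo-quotient $\mathbb{B}^c$ has carrier the quotient Heyting algebra by $x\cong_c y\iff x\wedge c=y\wedge c$ (classes $[x]$), with $\lozenge^c_i[x]=[\lozenge_i(x\wedge c)]$, $\Box^c_i[x]=[\Box_i(c\to x)]$. Set $\mathbb{A}^{\mathbb{E}}:=(\mathbb{A}')^{\overline{\mathsf{pre}}}$. The updated structure is $\mathcal{F}^{\mathbb{E}}=(\mathbb{A}^{\mathbb{E}},(\mu^{\mathbb{E}}_i))$ where $\mu^{\mathbb{E}}_i:\mathsf{Min}_i(\mathbb{A}^{\mathbb{E}}){\downarrow}\to[0,1]$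 is given by $\mu^{\mathbb{E}}_i([g])=0$ if $[g]=\bot$ and otherwise $\mu^{\mathbb{E}}_i([g])=\mu'_i(g)/\mu'_i(f)$, where $[f]$ is the only element of $\mathsf{Min}_i(\mathbb{A}^{\mathbb{E}})$ with $[g]\leq[f]$. Well-definedness means: this $[f]$ is unique, the denominator is nonzero, and the value does not depend on the chosen representatives. *)

(* Finite (epistemic) Heyting algebras are modelled as a
   finite bounded distributive lattice [L : finTBDistrLatticeType d] together
   with a Heyting implication [imp] (characterised by residuation) and
   agent-indexed operators [dia], [box]. *)
From mathcomp Require Import all_boot all_order all_algebra.
Set Implicit Arguments. Unset Strict Implicit. Unset Printing Implicit Defensive.
Import Order.TTheory GRing.Theory Num.Theory.

Section APE.

Variable Ag : Type.
Variables (disp : Order.disp_t) (L : finTBDistrLatticeType disp).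
Local Open Scope order_scope.

Definition heyting_imp (imp : L -> L -> L) : Prop :=
  forall a b c : L, (a `&` b <= c) = (a <= imp b c).

Definition monadic_ops (imp : L -> L -> L) (dia box : Ag -> L -> L) : Prop :=
  forall i : Ag,
  [/\ {homo dia i : x y / x <= y}, {homo box i : x y / x <= y},
      (forall a, a <= dia i a), (forall a, box i a <= a) &
      (forall a b, dia i (a `|` b) <= dia i a `|` dia i b)] /\
  [/\ (forall a b, box i (imp a b) <= imp (box i a) (box i b)),
      (forall a, dia i a <= box i (dia i a)),
      (forall a, dia i (box i a) <= box i a),
      (forall a b, box i (imp a b) <= imp (dia i a) (dia i b)) &
      (dia i \bot <= \bot /\ \top <= box i \top)].

Definition epistemic_HA (imp : L -> L -> L) (dia box : Ag -> L -> L) : Prop :=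
  [/\ heyting_imp imp, monadic_ops imp dia box &
      forall i a, dia i a `|` imp (dia i a) \bot = \top].

Definition is_minA (dia : Ag -> L -> L) (i : Ag) (c : L) : Prop :=
  [/\ c != \bot, dia i c = c &
      forall d, d < c -> dia i d = d -> d = \bot].

Definition in_domA (dia : Ag -> L -> L) (i : Ag) (x : L) : Prop :=
  exists2 c, is_minA dia i c & x <= c.

Variable R : realFieldType.

(* i-measure (i-premeasure + the extra conditions), given as a total map
   whose values are only constrained on its domain Min_i(A)↓. *)
Definition is_measure (dia : Ag -> L -> L) (i : Ag) (m : L -> R) : Prop :=
  [/\ (forall x, in_domA dia i x -> (0 <= m x)%R) &
      (forall x y, in_domA dia i x -> in_domA dia i y -> x <= y ->
                   (m x <= m y)%R)] /\
  [/\
      (forall a b c, is_minA dia i a -> b <= a -> c <= a ->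
         m (b `|` c) = (m b + m c - m (b `&` c))%R),
      ((exists x, in_domA dia i x) -> m \bot = 0%R),
      (forall a b c, is_minA dia i a -> b < c -> c <= a -> (m b < m c)%R) &
      (forall a, is_minA dia i a -> m a = 1%R)].

Definition APE_structure (imp : L -> L -> L) (dia box : Ag -> L -> L)
    (mu : Ag -> L -> R) : Prop :=
  epistemic_HA imp dia box /\ forall i, is_measure dia i (mu i).

(* The finite pre-ordered multiset Phi is a finite sequence [phi : 'I_n -> L];
   copies of the same element are ordered by their position. *)

Variable E : finType.

Definition prob_event_structure (sim : Ag -> rel E) (P : Ag -> E -> R)
    (n : nat) (phi : 'I_n -> L) (pre : 'I_n -> E -> R) : Prop :=
  [/\ (0 < #|E|)%N,
      (forall i, equivalence_rel (sim i)),
      (forall i e, (0 < P i e)%R /\ (P i e <= 1)%R) &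
      (forall i e, (\sum_(e' | sim i e e') P i e')%R = 1%R)] /\
  [/\
      (forall j k, phi j != phi k ->
         (phi j `&` phi k = \bot \/ (phi j < phi k) \/ (phi k < phi j))),
      (forall k e, (0 <= pre k e)%R),
      (forall k, (\sum_(e : E) pre k e)%R = 1%R) &
      (forall j k e, pre j e = 0%R ->
         (phi j < phi k \/ (phi j = phi k /\ (j < k)%N)) -> pre k e = 0%R)].

Section Update.
Variables (dia : Ag -> L -> L) (mu : Ag -> L -> R) (sim : Ag -> rel E)
  (P : Ag -> E -> R) (n : nat) (phi : 'I_n -> L) (pre : 'I_n -> E -> R).

Definition mb (a : L) : {set L} :=
  [set b : L | [&& [exists k, phi k == b], b < a &
                  ~~ [exists k, (b < phi k) && (phi k < a)]]].

Definition mu_a (i : Ag) (a x : L) : R :=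
  (mu i (x `&` a) - \sum_(b in mb a) mu i (x `&` b))%R.

(* the intermediate algebra A' = prod_E A : maps E -> L, pointwise *)
Definition leF (f g : E -> L) : Prop := forall e, f e <= g e.
Definition eqF (f g : E -> L) : Prop := forall e, f e = g e.
Definition ltF (f g : E -> L) : Prop := leF f g /\ ~ eqF f g.
Definition meetF (f g : E -> L) : E -> L := fun e => f e `&` g e.
Definition botF : E -> L := fun _ => \bot.
Definition diaF (i : Ag) (f : E -> L) : E -> L :=
  fun e => \join_(e' | sim i e e') dia i (f e').

Definition is_minF (i : Ag) (f : E -> L) : Prop :=
  [/\ ~ eqF f botF, eqF (diaF i f) f &
      forall d, ltF d f -> eqF (diaF i d) d -> eqF d botF].

Definition in_domF (i : Ag) (g : E -> L) : Prop :=
  exists2 f, is_minF i f & leF g f.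

Definition mu' (i : Ag) (f : E -> L) : R :=
  (\sum_(e : E) \sum_(k : 'I_n) P i e * mu_a i (phi k) (f e) * pre k e)%R.

Definition preb : E -> L := fun e => \join_(k | pre k e != 0%R) phi k.

(* the pseudo-quotient A^E = (A')^preb, described on representatives:
   [x] = [y] iff x /\ preb = y /\ preb ; [x] <= [y] iff x /\ preb <= y /\ preb;
   dia^c_i [x] = [dia'_i (x /\ preb)]. *)
Definition eqQ (f g : E -> L) : Prop := eqF (meetF f preb) (meetF g preb).
Definition leQ (f g : E -> L) : Prop := leF (meetF f preb) (meetF g preb).
Definition ltQ (f g : E -> L) : Prop := leQ f g /\ ~ eqQ f g.
Definition diaQ (i : Ag) (f : E -> L) : E -> L := diaF i (meetF f preb).

Definition is_minQ (i : Ag) (f : E -> L) : Prop :=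
  [/\ ~ eqQ f botF, eqQ (diaQ i f) f &
      forall d, ltQ d f -> eqQ (diaQ i d) d -> eqQ d botF].

Definition in_domQ (i : Ag) (g : E -> L) : Prop :=
  exists2 f, is_minQ i f & leQ g f.

(* Well-definedness of mu^E_i([g]) = mu'_i(g) / mu'_i(f) for a non-bottom
   [g] in Min_i(A^E)↓ *)
Definition muE_well_defined (i : Ag) : Prop :=
  forall g : E -> L, in_domQ i g -> ~ eqQ g botF ->
  exists f : E -> L,
  [/\ is_minQ i f, leQ g f &
      (forall f', is_minQ i f' -> leQ g f' -> eqQ f' f)] /\
  [/\
      (exists2 g0, eqQ g0 g & in_domF i g0),
      (exists2 f0, eqQ f0 f & in_domF i f0),
      (forall f0, eqQ f0 f -> in_domF i f0 -> mu' i f0 != 0%R) &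
      (forall g1 g2 f1 f2, eqQ g1 g -> eqQ g2 g -> eqQ f1 f -> eqQ f2 f ->
         in_domF i g1 -> in_domF i g2 -> in_domF i f1 -> in_domF i f2 ->
         (mu' i g1 / mu' i f1 = mu' i g2 / mu' i f2)%R)].

End Update.
End APE.

(* Uniqueness: the meet of two i-minimal classes of the pseudo-quotient lying
   above [g] is again fixed and non-zero, so it equals both.  Representatives:
   in an epistemic algebra every fixed element is complemented, hence below any
   fixed [y] meeting [x] there is an i-minimal [c] meeting [x]; spreading such a
   [c] over one [sim i]-class gives an i-minimal element of [A'] representing
   the minimal class, and everything below the class inherits it.  Denominator:
   [mu'_i] only sees [x /\ preb], and at a world where the class survives the
   lowest [phi k] with [pre k <> 0] meeting it contributes a positive term. *)
From mathcomp Require Import all_boot all_order all_algebra.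
Set Implicit Arguments. Unset Strict Implicit. Unset Printing Implicit Defensive.
Import Order.TTheory GRing.Theory Num.Theory.
Local Open Scope order_scope.

Lemma ex_minimal (d : Order.disp_t) (T : finPOrderType d) (p : pred T) x :
  p x -> exists2 z, p z & forall w, w < z -> ~~ p w.
Proof.
move=> px; have [z pz zmin] := arg_minnP (fun z => #|[pred w : T | w < z]|) px.
exists z => // w wz; apply/negP => /zmin; apply/negP; rewrite -ltnNge.
apply: proper_card; apply/properP; split; last by exists w; rewrite !inE ?ltxx.
by apply/subsetP => v; rewrite !inE => vw; exact: lt_trans vw wz.
Qed.

Lemma sumr_gt0 (R : numDomainType) (I : finType) (F : I -> R) j :
  (forall k, 0 <= F k)%R -> (0 < F j)%R -> (0 < \sum_k F k)%R.
Proof. by move=> F_ge0 Fj; rewrite (bigD1 j) //= ltr_pwDl ?sumr_ge0. Qed.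

Lemma eqFP (disp : Order.disp_t) (L : finTBDistrLatticeType disp) (E : finType)
    (f g : E -> L) :
  reflect (eqF f g) [forall e, f e == g e].
Proof. by apply: (iffP forallP) => fg e; apply/eqP/fg. Qed.

Lemma neqF (disp : Order.disp_t) (L : finTBDistrLatticeType disp) (E : finType)
    (f g : E -> L) :
  ~ eqF f g -> exists e, f e != g e.
Proof.
move=> fg; apply/existsP; rewrite -negb_forall; exact/(introN (eqFP f g)).
Qed.

Section EpistemicAlgebra.
Variables (Ag : Type) (disp : Order.disp_t) (L : finTBDistrLatticeType disp).
Variables (imp : L -> L -> L) (dia box : Ag -> L -> L) (i : Ag).
Hypothesis HA : epistemic_HA imp dia box.

Lemma dia_mono : {homo dia i : x y / x <= y}.
Proof. by case: HA => _ /(_ i) [[]]. Qed.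

Lemma le_dia a : a <= dia i a.
Proof. by case: HA => _ /(_ i) [[]]. Qed.

Lemma dia_idem a : dia i (dia i a) = dia i a.
Proof.
case: HA => _ /(_ i) [[_ _ _ box_le _] [_ dia_le_box box_dia _ _]] _.
apply/le_anti; rewrite le_dia andbT.
exact: le_trans (dia_mono (dia_le_box a)) (le_trans (box_dia _) (box_le _)).
Qed.

Lemma dia_meet_fixed a b :
  dia i a = a -> dia i b = b -> dia i (a `&` b) = a `&` b.
Proof.
move=> fa fb; apply/le_anti; rewrite le_dia andbT lexI.
by rewrite -[X in _ <= X]fa -[X in _ && (_ <= X)]fb !dia_mono ?leIl ?leIr.
Qed.

Lemma meet_neg d : d `&` imp d \bot = \bot.
Proof. by case: HA => Himp _ _; apply/eqP; rewrite -lex0 meetC Himp. Qed.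

(* Writing [~d] for [imp d \bot]: the axiom [box_i (a -> b) <= dia_i a -> dia_i b]
   at [a := ~d], [b := \bot], with [d <= ~~d] and [d <= box_i d] for fixed [d],
   gives [d /\ dia_i ~d = \bot]. *)
Lemma dia_neg_fixed d : dia i d = d -> dia i (imp d \bot) = imp d \bot.
Proof.
case: HA => Himp /(_ i) [[_ box_mono _ _ _] [_ dia_le_box _ box_imp [dia_bot _]]] _ fd.
apply/le_anti; rewrite le_dia andbT -Himp meetC; apply: le_trans dia_bot.
have d_box : d <= box i d by have := dia_le_box d; rewrite fd.
rewrite Himp; apply: le_trans (box_imp _ _); apply: le_trans d_box (box_mono _ _ _).
by rewrite -Himp meet_neg.
Qed.

Lemma join_neg_fixed d : dia i d = d -> d `|` imp d \bot = \top.
Proof. by move=> fd; case: HA => _ _ /(_ i d); rewrite fd. Qed.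

(* A minimal fixed [z <= y] meeting [x] is i-minimal: a fixed [d < z] disjoint
   from [x] is complemented, so [z /\ ~d] would be a smaller candidate. *)
Lemma ex_minA_below y x :
  dia i y = y -> y `&` x != \bot ->
  exists c, [/\ is_minA dia i c, c <= y & c `&` x != \bot].
Proof.
move=> fy yx; pose p z := [&& dia i z == z, z <= y & z `&` x != \bot].
have [z /and3P[/eqP fz zy zx] zmin] : exists2 z, p z & forall w, w < z -> ~~ p w.
  by apply: (@ex_minimal _ _ p y); rewrite /p fy eqxx lexx.
exists z; split=> //; split=> // [|d dz fd].
  by apply: contraNneq zx => ->; rewrite meet0x.
apply/eqP/negPn/negP => dn0.
have [dx|dx] := eqVneq (d `&` x) \bot; last first.
  by move: (zmin d dz); rewrite /p fd eqxx dx (le_trans (ltW dz) zy).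
set z' := z `&` imp d \bot.
have fz' : dia i z' = z' by apply: dia_meet_fixed => //; exact: dia_neg_fixed.
have z'x : z' `&` x = z `&` x.
  rewrite -[RHS]meetx1 -(join_neg_fixed fd) meetUr.
  have -> : z `&` x `&` d = \bot.
    by apply/eqP; rewrite -lex0 -dx lexI leIr /=; exact: le_trans (leIl _ _) (leIr _ _).
  by rewrite join0x /z' meetAC.
have z'z : z' < z.
  rewrite lt_neqAle leIl andbT; apply: contra_neq dn0 => z'E.
  rewrite -(meet_neg d); apply/esym/meet_idPl.
  by apply: le_trans (ltW dz) _; rewrite -z'E leIr.
by move: (zmin z' z'z); rewrite /p fz' eqxx z'x zx (le_trans (leIl _ _) zy).
Qed.

Section ProductAlgebra.
Variables (E : finType) (sim : Ag -> rel E).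
Hypothesis sim_equiv : equivalence_rel (sim i).

Let simxx e : sim i e e.
Proof. by case/equivalence_relP: sim_equiv. Qed.

Let sim_sym e e' : sim i e e' -> sim i e' e.
Proof.
by case/equivalence_relP: sim_equiv => refl ltr ee'; rewrite -(ltr _ _ ee') refl.
Qed.

Let sim_trans e1 e2 e3 : sim i e1 e2 -> sim i e2 e3 -> sim i e1 e3.
Proof. by case/equivalence_relP: sim_equiv => _ ltr e12; rewrite (ltr _ _ e12). Qed.

Definition on_class (e : E) (c : L) : E -> L :=
  fun e' => if sim i e e' then c else \bot.

Lemma diaF_mono f g : leF f g -> leF (diaF dia sim i f) (diaF dia sim i g).
Proof.
move=> fg e; apply/joinsP => e' ee'.
by apply: le_trans (dia_mono (fg e')) (joins_sup _ ee').
Qed.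

Lemma le_diaF f : leF f (diaF dia sim i f).
Proof. by move=> e; apply: le_trans (le_dia _) (joins_sup _ (simxx e)). Qed.

Lemma diaF_fixed_le f e e' :
  eqF (diaF dia sim i f) f -> sim i e e' -> dia i (f e) <= f e'.
Proof. by move=> ff ee'; rewrite -(ff e'); exact: joins_sup (sim_sym ee'). Qed.

Lemma on_class_fixed e c :
  dia i c = c -> eqF (diaF dia sim i (on_class e c)) (on_class e c).
Proof.
have dia_bot : dia i \bot = \bot.
  by apply/le_anti; rewrite le_dia andbT; case: HA => _ /(_ i) [_ [_ _ _ _ []]].
move=> fc e'; apply/le_anti; rewrite le_diaF andbT; apply/joinsP => e'' e'e''.
rewrite /on_class; case: ifP => ee''; last by rewrite dia_bot le0x.
by rewrite fc (sim_trans ee'' (sim_sym e'e'')).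
Qed.

Lemma on_class_minF e c : is_minA dia i c -> is_minF dia sim i (on_class e c).
Proof.
move=> [cn0 fc cmin]; split; first by move/(_ e); rewrite /on_class simxx; apply/eqP.
  exact: on_class_fixed.
move=> d [dc /neqF[e1 de1]] fd e2; apply/eqP/negPn/negP => de2.
have ee2 : sim i e e2.
  by apply: contraTT (dc e2); rewrite /on_class => /negbTE ->; rewrite lex0.
have fde2 : dia i (d e2) = d e2 by apply/le_anti; rewrite le_dia diaF_fixed_le.
have de2c : d e2 = c.
  have := dc e2; rewrite /on_class ee2 le_eqVlt => /orP[/eqP //|de2c].
  by move: de2; rewrite (cmin _ de2c fde2) eqxx.
move/eqP: de1; apply; apply/le_anti; rewrite dc /=; move: (dc e1); rewrite /on_class.
case: ifP => [ee1 _|_]; last by rewrite lex0 => /eqP ->.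
by rewrite -de2c -fde2 diaF_fixed_le // (sim_trans (sim_sym ee2) ee1).
Qed.

Lemma minF_minA M e : is_minF dia sim i M -> M e != \bot -> is_minA dia i (M e).
Proof.
move=> [Mnb fM Mmin] Me.
have fMe : dia i (M e) = M e by apply/le_anti; rewrite le_dia diaF_fixed_le.
have [c [cm cM _]] : exists c, [/\ is_minA dia i c, c <= M e & c `&` M e != \bot].
  by apply: ex_minA_below fMe _; rewrite meetxx.
have cl : leF (on_class e c) M.
  move=> e'; rewrite /on_class; case: ifP => ee'; last exact: le0x.
  by apply: le_trans cM _; rewrite -{1}fMe diaF_fixed_le.
have [cE|cne] := eqFP (on_class e c) M; first by rewrite -(cE e) /on_class simxx.
have [cn0 fc _] := cm.
have := Mmin _ (conj cl cne) (on_class_fixed e fc) e.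
by rewrite /on_class simxx => c0; rewrite c0 eqxx in cn0.
Qed.

Lemma in_domF_in_domA g : in_domF dia sim i g -> forall e, in_domA dia i (g e).
Proof.
move=> [M Mmin gM] e; have [Me|Me] := eqVneq (M e) \bot; last first.
  by exists (M e); [exact: minF_minA | exact: gM].
have [e1 Me1] : exists e1, M e1 != \bot by case: Mmin => /neqF.
by exists (M e1); [exact: minF_minA | rewrite (le_trans (gM e)) ?Me ?le0x].
Qed.

Section PseudoQuotient.
Variables (R : realFieldType) (n : nat) (phi : 'I_n -> L) (pre : 'I_n -> E -> R).
Local Notation pb := (preb phi pre).
Local Notation botF := (@botF _ L E).
Local Notation eqQ := (eqQ phi pre).
Local Notation leQ := (leQ phi pre).
Local Notation diaQ := (diaQ dia sim phi pre i).
Local Notation is_minQ := (is_minQ dia sim phi pre i).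

Lemma meetF_preb_eqQ g : eqQ (meetF g pb) g.
Proof. by move=> e; rewrite /meetF -meetA meetxx. Qed.

Lemma eqQ_sym f g : eqQ f g -> eqQ g f.
Proof. by move=> fg e; rewrite (fg e). Qed.

Lemma eqQ_trans f g h : eqQ f g -> eqQ g h -> eqQ f h.
Proof. by move=> fg gh e; rewrite (fg e). Qed.

Lemma neqQ_botF h : ~ eqQ h botF -> exists e, h e `&` pb e != \bot.
Proof. by move=> /neqF[e]; rewrite /meetF meet0x; exists e. Qed.

Lemma leQ_botF g h : leQ g h -> eqQ h botF -> eqQ g botF.
Proof.
move=> gh hb e; apply/le_anti; rewrite (le_trans (gh e)) ?(hb e) //.
by rewrite /meetF meet0x le0x.
Qed.

Lemma leQ_meetF g f f' : leQ g f -> leQ g f' -> leQ g (meetF f f').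
Proof.
move=> gf gf' e; rewrite /meetF lexI leIr andbT lexI.
by rewrite (le_trans (gf e)) ?(le_trans (gf' e)) ?leIl.
Qed.

Lemma diaQ_fixed h : leQ (diaQ h) h -> eqQ (diaQ h) h.
Proof.
move=> hh e; apply/le_anti; rewrite hh /meetF lexI leIr andbT /=.
exact: (le_diaF (meetF h pb)).
Qed.

Lemma diaQ_le_fixed h f : leQ h f -> eqQ (diaQ f) f -> leQ (diaQ h) f.
Proof.
move=> hf ff e; rewrite -(ff e) /meetF leI2 //.
by apply: diaF_mono => e'; exact: hf.
Qed.

Lemma fixedF_fixedQ f : eqF (diaF dia sim i f) f -> eqQ (diaQ f) f.
Proof.
move=> ff; apply: diaQ_fixed => e; rewrite /meetF leI2 // -(ff e).
by apply: diaF_mono => e'; exact: leIl.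
Qed.

Lemma minQ_eq f h :
  is_minQ f -> leQ h f -> eqQ (diaQ h) h -> ~ eqQ h botF -> eqQ h f.
Proof.
move=> [_ _ fmin] hf fh hnb; have [//|hne] := eqFP (meetF h pb) (meetF f pb).
by case: hnb; apply: fmin.
Qed.

Lemma minQ_unique g f f' :
  ~ eqQ g botF -> is_minQ f -> leQ g f -> is_minQ f' -> leQ g f' -> eqQ f' f.
Proof.
move=> gnb fmin gf f'min gf'; pose h := meetF f f'.
have hf : leQ h f by move=> e; rewrite leI2 ?leIl.
have hf' : leQ h f' by move=> e; rewrite leI2 ?leIr.
have fh : eqQ (diaQ h) h.
  apply/diaQ_fixed/leQ_meetF; apply: diaQ_le_fixed => //.
    by case: fmin.
  by case: f'min.
have hnb : ~ eqQ h botF by move/(leQ_botF (leQ_meetF gf gf')).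
by move=> e; rewrite -(minQ_eq fmin hf fh hnb e) (minQ_eq f'min hf' fh hnb e).
Qed.

(* If [x = f e0 /\ preb e0 <> \bot], an i-minimal [c <= dia_i x] meeting [x],
   spread over the [sim i]-class of [e0], represents the minimal class [f]. *)
Lemma ex_minF_eqQ f : is_minQ f -> exists2 m, is_minF dia sim i m & eqQ m f.
Proof.
move=> fmin; have [fnb ffix _] := fmin; have [e0 fe0] := neqQ_botF fnb.
set x := f e0 `&` pb e0.
have [c [cm cx xc]] : exists c, [/\ is_minA dia i c, c <= dia i x & c `&` x != \bot].
  by apply: ex_minA_below (dia_idem x) _; rewrite (meet_idPr (le_dia x)).
exists (on_class e0 c); first exact: on_class_minF.
apply: minQ_eq fmin _ _ _.
- move=> e; rewrite /meetF /on_class; case: ifP => [e0e|_]; last by rewrite meet0x le0x.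
  have := ffix e; rewrite /meetF => <-; rewrite leI2 //.
  exact: le_trans cx (joins_sup _ (sim_sym e0e)).
- by apply: fixedF_fixedQ; apply: on_class_fixed; case: cm.
move/(_ e0); rewrite /meetF /on_class simxx meet0x => cb.
by move: xc; rewrite -lex0 -cb leI2 ?leIr.
Qed.

Lemma in_domF_below_minQ f h :
  is_minQ f -> leQ h f -> in_domF dia sim i (meetF h pb).
Proof.
move=> fmin hf; have [m mmin mf] := ex_minF_eqQ fmin.
by exists m => // e; rewrite (le_trans (hf e)) // -(mf e) leIl.
Qed.

End PseudoQuotient.
End ProductAlgebra.
End EpistemicAlgebra.

Section UpdatedMeasure.
Variables (Ag : Type) (disp : Order.disp_t) (L : finTBDistrLatticeType disp).
Variables (dia : Ag -> L -> L) (i : Ag) (R : realFieldType) (mu : Ag -> L -> R).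
Variables (n : nat) (phi : 'I_n -> L).
Hypothesis mu_meas : is_measure dia i (mu i).
Hypothesis phi_tree : forall j k, phi j != phi k ->
  phi j `&` phi k = \bot \/ phi j < phi k \/ phi k < phi j.

Lemma mu_bot c : is_minA dia i c -> mu i \bot = 0%R.
Proof.
move=> cm; case: mu_meas => _ [_ mu_bot0 _ _].
by apply: mu_bot0; exists \bot, c; rewrite ?le0x.
Qed.

Lemma mu_lt c x y : is_minA dia i c -> x < y -> y <= c -> (mu i x < mu i y)%R.
Proof. by case: mu_meas => _ [_ _ mu_strict _]; exact: mu_strict. Qed.

Lemma mu_meet_joins c x (s : seq L) :
  is_minA dia i c -> x <= c -> uniq s ->
  {in s &, forall b b', b != b' -> b `&` b' = \bot} ->
  (\sum_(b <- s) mu i (x `&` b))%R = mu i (x `&` \join_(b <- s) b).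
Proof.
case: mu_meas => _ [mu_add _ _ _] cm xc; elim: s => [|b s IHs] /=.
  by rewrite !big_nil meetx0 (mu_bot cm).
case/andP=> bs us disj; rewrite !big_cons IHs //; last first.
  by move=> u v us' vs'; apply: disj; rewrite inE ?us' ?vs' orbT.
have xbc : x `&` b <= c by exact: le_trans (leIl _ _) xc.
have xsc : x `&` \join_(b' <- s) b' <= c by exact: le_trans (leIl _ _) xc.
rewrite meetUr (mu_add c) //; suff -> : x `&` b `&` (x `&` \join_(b' <- s) b') = \bot.
  by rewrite (mu_bot cm) subr0.
have bs_disj : b `&` \join_(b' <- s) b' = \bot.
  rewrite (big_morph (Order.meet b) (meetUr b) (meetx0 b)) big1_seq //= => b' b's.
  by apply: disj; rewrite ?inE ?eqxx ?b's ?orbT //; apply: contraNneq bs => ->.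
by apply/eqP; rewrite -lex0 -[X in _ <= X]bs_disj leI2 ?leIr.
Qed.

Lemma mbP a b :
  b \in mb phi a ->
  [/\ exists k, phi k = b, b < a & forall k, b < phi k -> ~~ (phi k < a)].
Proof.
rewrite inE => /and3P[/existsP[j /eqP bj] ba nb]; split=> [|//|k bk]; first by exists j.
by apply: contra nb => ka; apply/existsP; exists k; rewrite bk.
Qed.

Lemma mb_disjoint a : {in enum (mb phi a) &, forall b b', b != b' -> b `&` b' = \bot}.
Proof.
move=> b b'; rewrite !mem_enum => /mbP[[j <-] ja jmax] /mbP[[k <-] ka kmax] jk.
by case: (phi_tree jk) => [//|[/jmax|/kmax]]; rewrite ?ja ?ka.
Qed.

Lemma mu_a_ge0 a x : in_domA dia i x -> (0 <= mu_a mu phi i a x)%R.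
Proof.
move=> [c cm xc]; have xIc y : in_domA dia i (x `&` y).
  by exists c => //; exact: le_trans (leIl _ _) xc.
rewrite /mu_a -big_enum (mu_meet_joins cm xc (enum_uniq _) (@mb_disjoint a)) subr_ge0.
case: mu_meas => [[_ mu_mono] _]; apply: mu_mono; rewrite ?xIc // leI2 //.
by apply/joinsP_seq => b; rewrite mem_enum => /mbP[_ /ltW].
Qed.

Lemma mu_a_meet a x y : x `&` a = y `&` a -> mu_a mu phi i a x = mu_a mu phi i a y.
Proof.
move=> xy; rewrite /mu_a xy; congr (_ - _)%R; apply: eq_bigr => b /mbP[_ /ltW ba _].
by rewrite -(meet_idPl ba) !meetA !(meetAC _ b) xy.
Qed.

Variables (E : finType) (P : Ag -> E -> R) (pre : 'I_n -> E -> R).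
Hypothesis P_gt0 : forall e, (0 < P i e)%R.
Hypothesis pre_ge0 : forall k e, (0 <= pre k e)%R.
Hypothesis pre_up : forall j k e, pre j e = 0%R -> phi j < phi k -> pre k e = 0%R.
Local Notation botF := (@botF _ L E).

Lemma mu'_eqQ g1 g2 : eqQ phi pre g1 g2 -> mu' mu P phi pre i g1 = mu' mu P phi pre i g2.
Proof.
move=> g12; apply: eq_bigr => e _; apply: eq_bigr => k _.
have [->|pk] := eqVneq (pre k e) 0%R; first by rewrite !mulr0.
congr (_ * _ * _)%R; apply: mu_a_meet.
have kp : phi k <= preb phi pre e by exact: joins_sup.
have g12e : g1 e `&` preb phi pre e = g2 e `&` preb phi pre e := g12 e.
by rewrite -(meet_idPl kp) !meetA !(meetAC _ (phi k)) g12e.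
Qed.

(* At a world [e0] where [f] survives, take the lowest [phi k0] with
   [pre k0 e0 <> 0] meeting [f e0]: everything below it in [Phi] also has
   nonzero precondition, hence misses [f e0], so [mu_a (phi k0) (f e0) > 0]. *)
Lemma mu'_gt0 f :
  (forall e, in_domA dia i (f e)) -> ~ eqQ phi pre f botF ->
  (0 < mu' mu P phi pre i f)%R.
Proof.
move=> fdom /neqQ_botF[e0 fe0]; set x := f e0.
have [k1 /andP[pk1 xk1]] : exists k, (pre k e0 != 0%R) && (x `&` phi k != \bot).
  apply/existsP; apply: contraNT fe0; rewrite negb_exists => /forallP none.
  apply/eqP/joins_disjoint => k pk; apply/eqP.
  by move: (none k); rewrite pk /= negbK.
pose p y := [exists k, [&& phi k == y, pre k e0 != 0%R & x `&` y != \bot]].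
have [_ /existsP[k0 /and3P[/eqP <- pk0 xk0]] k0min] :
    exists2 y, p y & forall w, w < y -> ~~ p w.
  by apply: (@ex_minimal _ _ p (phi k1)); apply/existsP; exists k1; rewrite eqxx pk1.
have [c cm xc] := fdom e0.
have mu_a_gt0 : (0 < mu_a mu phi i (phi k0) x)%R.
  rewrite /mu_a big1 => [|b /mbP[[j <-] jk0 _]].
    rewrite subr0 -(mu_bot cm); apply: mu_lt cm _ (le_trans (leIl _ _) xc).
    by rewrite lt0x.
  have pj : pre j e0 != 0%R by apply: contra pk0 => /eqP/pre_up/(_ jk0) ->.
  suff -> : x `&` phi j = \bot by exact: mu_bot cm.
  apply/eqP; apply: contraNT (k0min _ jk0) => xj.
  by apply/existsP; exists j; rewrite eqxx pj.
have term_ge0 e k : (0 <= P i e * mu_a mu phi i (phi k) (f e) * pre k e)%R.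
  by rewrite !mulr_ge0 ?mu_a_ge0 // ltW.
rewrite /mu'; apply: (sumr_gt0 (j := e0)) => [e|]; first exact: sumr_ge0.
apply: (sumr_gt0 (j := k0)) => //.
by rewrite !mulr_gt0 // lt0r pk0 pre_ge0.
Qed.

End UpdatedMeasure.

Theorem lemma6 (Ag : Type) (disp : Order.disp_t) (L : finTBDistrLatticeType disp)
  (imp : L -> L -> L) (dia box : Ag -> L -> L)
  (R : realFieldType) (mu : Ag -> L -> R)
  (E : finType) (sim : Ag -> rel E) (P : Ag -> E -> R)
  (n : nat) (phi : 'I_n -> L) (pre : 'I_n -> E -> R) :
  APE_structure imp dia box mu ->
  prob_event_structure sim P phi pre ->
  forall i : Ag, muE_well_defined dia mu sim P phi pre i.
Proof.
move=> [HA mu_meas] [[_ sim_equiv P_bounds _] [phi_tree pre_ge0 _ pre_up]].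
move=> i g [f fmin gf] gnb.
have [fnb _ _] := fmin.
have pre_up_lt j k e : pre j e = 0%R -> phi j < phi k -> pre k e = 0%R.
  by move=> pj jk; apply: pre_up pj (or_introl jk).
have dom_below h : leQ phi pre h f -> in_domF dia sim i (meetF h (preb phi pre)).
  exact: (in_domF_below_minQ (i := i) HA (sim_equiv i) fmin).
have mu'_gt0_f f0 :
    eqQ phi pre f0 f -> in_domF dia sim i f0 -> (0 < mu' mu P phi pre i f0)%R.
  move=> f0f /(in_domF_in_domA HA (sim_equiv i)) f0dom.
  have P_gt0 e : (0 < P i e)%R by case: (P_bounds i e).
  apply: (mu'_gt0 (mu_meas i) phi_tree P_gt0 pre_ge0 pre_up_lt f0dom).
  by move=> f0b; apply: fnb; exact: eqQ_trans (eqQ_sym f0f) f0b.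
exists f; split.
  by split=> // f'; exact: (minQ_unique (i := i) HA (sim_equiv i) gnb fmin gf).
split.
- by exists (meetF g (preb phi pre)); [exact: meetF_preb_eqQ | exact: dom_below].
- by exists (meetF f (preb phi pre)); [exact: meetF_preb_eqQ | exact: dom_below].
- by move=> f0 f0f /(mu'_gt0_f _ f0f)/lt0r_neq0.
move=> g1 g2 f1 f2 g1g g2g f1f f2f _ _ _ _.
rewrite (mu'_eqQ i mu P (eqQ_trans g1g (eqQ_sym g2g))).
by rewrite (mu'_eqQ i mu P (eqQ_trans f1f (eqQ_sym f2f))).
Qed.
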